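(* Let $x,y\in\mathbb{R}[X]$ be nonzero polynomials with $\deg x=\deg y$. (a) If either $y(u)>0$ for every real root $u$ of $x$, or $y(u)<0$ for every real root $u$ of $x$, then there exists $\beta\in\Gamma$ such that $\delta=x^2+y\beta\in\Gamma^+$ and $\deg x-1\le\deg\beta\le\deg x=\deg\delta/2$. (b) If either $x(z)>0$ for every real root $z$ of $y$, or $x(z)<0$ for every real root $z$ of $y$, then there exists $\eta\in\Gamma$ such that $\delta=x\eta+y^2\in\Gamma^+$ and $\deg y-1\le\deg\eta\le\deg y=\deg\delta/2$.
   Context: $\Gamma$ denotes the set of polynomials in $\mathbb{R}[X]$ having no real root (nonzero constants included), and $\Gamma^+=\{f\in\mathbb{R}[X] : f(r)>0 \text{ for all } r\in\mathbb{R}\}$. *)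

(* R[X] is rendered as {poly R} for an arbitrary real closed
   field R (the statement is first-order in the coefficients, so by Tarski
   transfer this is equivalent to the case R = the reals). *)
From HB Require Import structures.
From mathcomp Require Import all_boot all_order all_algebra.
Set Implicit Arguments. Unset Strict Implicit. Unset Printing Implicit Defensive.
Import Order.TTheory GRing.Theory Num.Theory.
Local Open Scope ring_scope.

(* degree of a polynomial (meaningful for nonzero p) *)
Definition deg (R : ringType) (p : {poly R}) : nat := (size p).-1.

(* Gamma: polynomials with no real root (nonzero constants included, 0 excluded) *)
Definition Gamma (R : rcfType) (p : {poly R}) : Prop := forall r : R, ~~ root p r.

Definition GammaPos (R : rcfType) (p : {poly R}) : Prop := forall r : R, 0 < p.[r].

From HB Require Import structures.
From mathcomp Require Import all_boot all_order all_algebra polyrcf.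
From mathcomp Require Import ring lra zify.
Set Implicit Arguments. Unset Strict Implicit. Unset Printing Implicit Defensive.
Import Order.TTheory GRing.Theory Num.Theory.
Local Open Scope ring_scope.

(* Both parts of the theorem reduce to one positivity statement about pencils
   L S + T of polynomials over a real closed field: if S >= 0 has even degree
   and positive leading coefficient, deg T <= deg S, and T > 0 at the roots of
   S, then L S + T > 0 everywhere for some L > 0.  Part (a) applies it to
   S = x^2 and T = y (X^2 + 1)^k with k = deg x / 2, so beta = L^-1 (X^2 + 1)^k;
   the case y < 0 follows by changing the signs of y and beta, and part (b) is
   part (a) with x and y exchanged.

   The pencil statement is proved through the Wronskian W = T' S - T S', which
   does not depend on L.  If L S + T took a negative value, it would be
   negative on an interval ]a, b[ between two of its roots, where S > 0; the
   pencil decreases at a and increases at b, so W changes sign on [a, b] and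
   has a root c there with L S(c) + T(c) <= 0 < S(c).  Unless T is a multiple
   of S, W has finitely many roots, so taking L above the finitely many values
   -T(c)/S(c) excludes this; a slightly larger L makes the pencil positive. *)

Section Pencil.
Variable R : rcfType.
Implicit Types (S T P : {poly R}) (L : R).

(* The Wronskian of S and T; where S is nonzero it is S^2 (T/S)'. *)
Definition wronskian S T : {poly R} := T^`() * S - T * S^`().

(* Critical points of T/S are those of (L S + T)/S. *)
Lemma wronskian_pencil L S T : wronskian S (L *: S + T) = wronskian S T.
Proof. by rewrite /wronskian !derivE -!mul_polyC; ring. Qed.

(* A vanishing Wronskian forces T to be a constant multiple of S: otherwise
   U = T - (T(u)/S(u)) S is nonzero, vanishes at u and satisfies U' S = U S';
   writing U = q (X - u)^(m+1) with q(u) != 0 and cancelling (X - u)^m yields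
   (m+1) q(u) S(u) = 0, which is absurd. *)
Lemma wronskian_eq0 S T u : S.[u] != 0 -> wronskian S T = 0 ->
  T = (T.[u] / S.[u]) *: S.
Proof.
move=> Su W0; set k := T.[u] / S.[u].
apply/eqP; rewrite -subr_eq0; set U := T - k *: S.
have WU : U^`() * S = U * S^`().
  apply/eqP; rewrite -subr_eq0.
  by rewrite -[_ - _]/(wronskian S U) /U -scaleNr addrC wronskian_pencil W0.
have Uu : U.[u] = 0 by rewrite /U !hornerE divfK // subrr.
apply/negPn/negP => U0.
have [[|m] [q /implyP/(_ U0) qu Ue]] := multiplicity_XsubC U u.
  by move: Uu; rewrite Ue expr0 mulr1 => /eqP; rewrite -rootE (negPf qu).
set Z := 'X - u%:P in Ue.
have reduced : (q^`() * Z + q *+ m.+1) * S = q * Z * S^`().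
  apply/eqP; rewrite -subr_eq0; apply/eqP.
  have /eqP := WU; rewrite Ue derivM deriv_exp derivXsubC mul1r -subr_eq0.
  have -> : (q^`() * Z ^+ m.+1 + q * (Z ^+ m *+ m.+1)) * S
             - q * Z ^+ m.+1 * S^`()
      = ((q^`() * Z + q *+ m.+1) * S - q * Z * S^`()) * Z ^+ m.
    by rewrite !exprS; ring.
  by rewrite mulf_eq0 expf_eq0 polyXsubC_eq0 andbF orbF => /eqP.
have := congr1 (horner^~ u) reduced.
rewrite /Z !hornerE subrr !mulr0 add0r mul0r => /eqP.
by rewrite hornerMn -mulr_natr !mulf_eq0 pnatr_eq0 (negPf Su) -rootE (negPf qu).
Qed.

(* The pencil is positive at the critical points where S > 0 once L exceeds
   the largest value of -T/S at the (finitely many) roots of the Wronskian;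
   if the Wronskian vanishes, T = k S and any L > -k will do. *)
Lemma critical_values_bounded S T : S != 0 ->
  exists B, forall L, B < L -> forall c, root (wronskian S T) c -> 0 < S.[c] ->
    0 < (L *: S + T).[c].
Proof.
move=> S0; have [W0|W0] := eqVneq (wronskian S T) 0.
  have Su : S.[cauchy_bound S] != 0.
    by rewrite -rootE (ge_cauchy_bound S0) // in_itv /= lexx.
  pose k := T.[cauchy_bound S] / S.[cauchy_bound S].
  have TE : T = k *: S := wronskian_eq0 Su W0.
  exists (- k) => L Lk c _ Sc.
  by rewrite TE -scalerDl hornerZ mulr_gt0 //; lra.
pose B := \big[Num.max/0]_(c <- rootsR (wronskian S T)) (- T.[c] / S.[c]).
exists B => L LB c Wc Sc.
have : - T.[c] / S.[c] <= B.
  rewrite /B; apply: (le_bigmax_seq _ _ xpredT (fun z => - T.[z] / S.[z])) => //.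
  by rewrite -[_ \in _](roots_onP (roots_on_rootsR W0)).
rewrite ler_pdivrMr // hornerD hornerZ => TB.
have : B * S.[c] < L * S.[c] by rewrite ltr_pM2r.
lra.
Qed.

(* If P(a) = 0 < P'(a), then P(s) has the sign of s - a near a, because
   P = (X - a) Q with Q(a) = P'(a). *)
Lemma deriv_gt0_at_root P a : P.[a] = 0 -> 0 < P^`().[a] ->
  exists2 d, 0 < d & forall s, `|s - a| < d -> 0 <= P.[s] * (s - a).
Proof.
move=> /eqP Pa dPa; have [Q PE] := factor_theorem P a Pa.
have Qa : Q.[a] = P^`().[a].
  by rewrite PE derivM derivXsubC !hornerE subrr mulr0 add0r.
rewrite -Qa in dPa; have [d d0 near] := poly_cont a Q dPa.
exists d => // s /near; rewrite ltr_distlC => /andP[_ QsQa].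
have Qs : 0 < Q.[s] by lra.
rewrite PE hornerM hornerXsubC -mulrA; exact: mulr_ge0 (ltW Qs) (sqr_ge0 _).
Qed.

Lemma deriv_le0_at_left_root P a b : a < b -> P.[a] = 0 ->
  {in `]a, b[, forall s, P.[s] < 0} -> P^`().[a] <= 0.
Proof.
move=> ab Pa neg; rewrite leNgt; apply/negP => dPa.
have [d d0 near] := deriv_gt0_at_root Pa dPa.
pose e := Num.min d (b - a).
have e0 : 0 < e by rewrite lt_min d0 subr_gt0.
have [ed eb] : e <= d /\ e <= b - a by rewrite !ge_min !lexx ?orbT.
have : 0 <= P.[a + e / 2] * (a + e / 2 - a).
  by apply: near; rewrite addrC addKr ger0_norm; lra.
rewrite pmulr_lge0; last lra.
by rewrite leNgt neg // in_itv /=; apply/andP; split; lra.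
Qed.

Lemma deriv_ge0_at_right_root P a b : a < b -> P.[b] = 0 ->
  {in `]a, b[, forall s, P.[s] < 0} -> 0 <= P^`().[b].
Proof.
move=> ab Pb neg; rewrite leNgt -oppr_gt0 -hornerN -derivN; apply/negP => dPb.
have NPb : (- P).[b] = 0 by rewrite hornerN Pb oppr0.
have [d d0 near] := deriv_gt0_at_root NPb dPb.
pose e := Num.min d (b - a).
have e0 : 0 < e by rewrite lt_min d0 subr_gt0.
have [ed eb] : e <= d /\ e <= b - a by rewrite !ge_min !lexx ?orbT.
have : 0 <= (- P).[b - e / 2] * (b - e / 2 - b).
  by apply: near; rewrite addrAC subrr add0r normrN ger0_norm; lra.
rewrite hornerN mulNr -mulrN pmulr_lge0; last lra.
by rewrite leNgt neg // in_itv /=; apply/andP; split; lra.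
Qed.

Lemma negative_interval P l r h : l < r -> r < h ->
  0 < P.[l] -> P.[r] < 0 -> 0 < P.[h] ->
  exists a b, [/\ a < r, r < b, P.[a] = 0, P.[b] = 0
                & {in `]a, b[, forall s, P.[s] < 0}].
Proof.
move=> lr rh Pl Pr Ph.
have P0 : P != 0 by apply: contraTneq Pr => ->; rewrite horner0 ltxx.
have [a [Pa ar noroot_ar]] :
    exists a, [/\ P.[a] = 0, a < r & {in `]a, r[, forall s, ~~ root P s}].
  case: (prev_rootP P l r) => [|y _ Py yr noroot_yr|_ _ _ noroot_lr].
  - by move/eqP: P0.
  - by exists y; split => //; rewrite (itvP yr).
  - have sign_lr : P.[l] * P.[r] < 0 by rewrite pmulr_rlt0.
    have [z zlr Pz] := poly_ivtoo (ltW lr) sign_lr.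
    by rewrite (negPf (noroot_lr z zlr)) in Pz.
have [b [Pb rb noroot_rb]] :
    exists b, [/\ P.[b] = 0, r < b & {in `]r, b[, forall s, ~~ root P s}].
  case: (next_rootP P r h) => [|y _ Py ry noroot_ry|_ _ _ noroot_rh].
  - by move/eqP: P0.
  - by exists y; split => //; rewrite (itvP ry).
  - have sign_rh : P.[r] * P.[h] < 0 by rewrite nmulr_rlt0.
    have [z zrh Pz] := poly_ivtoo (ltW rh) sign_rh.
    by rewrite (negPf (noroot_rh z zrh)) in Pz.
have noroot_ab : {in `]a, b[, forall s, ~~ root P s}.
  move=> s; rewrite in_itv /= => /andP[a_s s_b].
  case: (ltgtP s r) => [sr|rs|->]; last by rewrite rootE lt_eqF.
  - by apply: noroot_ar; rewrite in_itv /= a_s sr.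
  - by apply: noroot_rb; rewrite in_itv /= rs s_b.
have rab : r \in `]a, b[ by rewrite in_itv /= ar rb.
exists a, b; split => // s sab.
by rewrite -sgr_lt0 (polyrN0_itv noroot_ab rab sab) sgr_lt0.
Qed.

Lemma positive_far_out P r : 0 < lead_coef P -> ~~ odd (size P).-1 ->
  exists l h, [/\ l < r, r < h, 0 < P.[l] & 0 < P.[h]].
Proof.
move=> lcP evP; have P0 : P != 0 by rewrite -lead_coef_eq0 gt_eqF.
pose M := Num.max (cauchy_bound P) (`|r| + 1).
have [Mc Mr] : cauchy_bound P <= M /\ `|r| + 1 <= M
  by split; rewrite le_max lexx ?orbT.
have [r_le r_ge] : r <= `|r| /\ - r <= `|r|.
  by rewrite -[in X in _ /\ X]normrN !ler_norm.
exists (- M), M; split; [lra | lra | |].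
- have : - M \in `]-oo, - cauchy_bound P] by rewrite in_itv /= lerN2.
  move=> /(sgp_minftyP (le_cauchy_bound P0)) /eqP.
  by rewrite /sgp_minfty -signr_odd (negPf evP) mul1r (gtr0_sg lcP) sgr_cp0.
- have : M \in `[cauchy_bound P, +oo[ by rewrite in_itv /= Mc.
  move=> /(sgp_pinftyP (ge_cauchy_bound P0)) /eqP.
  by rewrite /sgp_pinfty (gtr0_sg lcP) sgr_cp0.
Qed.

Lemma nonneg_from_critical S P : (forall r, 0 <= S.[r]) ->
  (forall r, S.[r] = 0 -> 0 < P.[r]) ->
  (forall c, root (wronskian S P) c -> 0 < S.[c] -> 0 < P.[c]) ->
  0 < lead_coef P -> ~~ odd (size P).-1 -> forall r, 0 <= P.[r].
Proof.
move=> S_ge0 P_pos_Sroot P_pos_crit lcP evP r.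
rewrite leNgt; apply/negP => Pr.
have [l [h [lr rh Pl Ph]]] := positive_far_out r lcP evP.
have [a [b [ar rb Pa Pb neg]]] := negative_interval lr rh Pl Pr Ph.
have ab : a < b by apply: lt_trans rb.
have P_le0 t : a <= t <= b -> P.[t] <= 0.
  have [->|ta] := eqVneq t a; first by rewrite Pa.
  have [->|tb] := eqVneq t b; first by rewrite Pb.
  rewrite [a <= t]le_eqVlt [t <= b]le_eqVlt eq_sym (negPf ta) (negPf tb) /=.
  move=> tab.
  by apply: ltW; apply: neg; rewrite in_itv.
have S_gt0 t : a <= t <= b -> 0 < S.[t].
  move=> abt; rewrite lt_def S_ge0 andbT; apply/eqP => St.
  by have := P_pos_Sroot t St; rewrite ltNge P_le0.
have W_end t : P.[t] = 0 -> (wronskian S P).[t] = P^`().[t] * S.[t].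
  by move=> Pt; rewrite /wronskian !hornerE Pt mul0r subr0.
have Sa : 0 < S.[a] by rewrite S_gt0 // lexx ltW.
have Sb : 0 < S.[b] by rewrite S_gt0 // lexx ltW.
have Wa : (wronskian S P).[a] <= 0.
  by rewrite W_end // pmulr_lle0 // (deriv_le0_at_left_root ab Pa neg).
have Wb : 0 <= (wronskian S P).[b].
  by rewrite W_end // pmulr_lge0 // (deriv_ge0_at_right_root ab Pb neg).
have W_sign : (wronskian S P).[a] <= 0 <= (wronskian S P).[b] by rewrite Wa Wb.
have [c cab Wc] := poly_ivt (ltW ab) W_sign.
by have := P_pos_crit c Wc (S_gt0 c cab); rewrite ltNge P_le0.
Qed.

Lemma pencil_size L S T : S != 0 -> (size T <= size S)%N ->
  0 < L * lead_coef S + T`_(size S).-1 ->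
  size (L *: S + T) = size S /\
  lead_coef (L *: S + T) = L * lead_coef S + T`_(size S).-1.
Proof.
move=> S0 TS top_pos.
have top : (L *: S + T)`_(size S).-1 = L * lead_coef S + T`_(size S).-1.
  by rewrite coefD coefZ lead_coefE.
have size_le : (size (L *: S + T)%R <= size S)%N.
  by apply: leq_trans (size_polyD _ _) _; rewrite geq_max size_scale_leq.
have size_eq : size (L *: S + T) = size S.
  apply/eqP; rewrite eqn_leq size_le (polySpred S0) ltnNge; apply/negP => small.
  by move: top_pos; rewrite -top nth_default // ltxx.
by split => //; rewrite lead_coefE size_eq top.
Qed.

Lemma pencil_positive S T : (forall r, 0 <= S.[r]) ->
  (forall r, S.[r] = 0 -> 0 < T.[r]) -> (size T <= size S)%N ->
  0 < lead_coef S -> ~~ odd (size S).-1 ->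
  exists L, [/\ 0 < L, GammaPos (L *: S + T) & size (L *: S + T) = size S].
Proof.
move=> S_ge0 T_pos TS lcS evS.
have S0 : S != 0 by rewrite -lead_coef_eq0 gt_eqF.
have [B crit] := critical_values_bounded T S0.
set lc := lead_coef S in lcS; set t := T`_(size S).-1.
pose L := `|B| + `|t| / lc + 1.
have t_lc_ge0 : 0 <= `|t| / lc by rewrite divr_ge0 // ltW.
have L_gt0 : 0 < L by rewrite /L; have := normr_ge0 B; lra.
have pencil_ok L' : L <= L' ->
    size (L' *: S + T) = size S /\ 0 < lead_coef (L' *: S + T).
  move=> LL'; have lead_pos : 0 < L' * lc + t.
    have : (`|t| / lc + 1) * lc <= L' * lc.
      by rewrite ler_pM2r //; have := normr_ge0 B; rewrite /L in LL'; lra.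
    rewrite mulrDl divfK ?gt_eqF // mul1r.
    have : - t <= `|t| by rewrite -normrN ler_norm.
    lra.
  by have [-> ->] := pencil_size S0 TS lead_pos.
have P_ge0 : forall r, 0 <= (L *: S + T).[r].
  have [sizeL leadL] := pencil_ok L (lexx L).
  apply: (nonneg_from_critical S_ge0) => //.
  - by move=> r Sr; rewrite hornerD hornerZ Sr mulr0 add0r T_pos.
  - rewrite wronskian_pencil; apply: crit.
    by rewrite /L; have := ler_norm B; lra.
  - by rewrite sizeL.
have [sizeL1 _] := pencil_ok (L + 1) ltac:(lra).
exists (L + 1); split => //; first lra.
move=> r; rewrite scalerDl scale1r addrAC hornerD.
have [Sr|Sr] := eqVneq S.[r] 0.
  by rewrite Sr addr0 hornerD hornerZ Sr mulr0 add0r T_pos.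
have := P_ge0 r; have : 0 < S.[r] by rewrite lt_def Sr S_ge0.
lra.
Qed.

Definition square_completion (x y beta : {poly R}) : Prop :=
  Gamma beta /\ GammaPos (x ^+ 2 + y * beta) /\
  (deg x - 1 <= deg beta)%N /\ (deg beta <= deg x)%N /\
  (deg (x ^+ 2 + y * beta) = 2 * deg x)%N.

Lemma square_completion_opp (x y beta : {poly R}) :
  square_completion x (- y) beta -> square_completion x y (- beta).
Proof.
rewrite /square_completion /Gamma /deg mulrN -mulNr size_polyN.
by case=> noroot rest; split => // r; rewrite rootN.
Qed.

(* Part (a) when y > 0 at the roots of x: beta = L^-1 (X^2 + 1)^(deg x / 2). *)
Lemma square_completion_pos (x y : {poly R}) :
  x != 0 -> (size y <= size x)%N ->
  (forall u, root x u -> 0 < y.[u]) -> exists beta, square_completion x y beta.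
Proof.
move=> x0 yx y_pos.
pose n := deg x; pose k := n./2.
pose b : {poly R} := ('X^2 + 1) ^+ k.
have b_pos r : 0 < b.[r].
  by rewrite /b horner_exp !hornerE exprn_gt0 // ltr_wpDl ?sqr_ge0.
have b0 : b != 0 by apply: contraTneq (b_pos 0) => ->; rewrite horner0 ltxx.
have size_b : size b = (k * 2).+1.
  by rewrite (polySpred b0) size_exp size_XnaddC // mulnC.
have size_x : size x = n.+1 by rewrite (polySpred x0).
have size_x2 : size (x ^+ 2) = (n * 2).+1.
  by rewrite (polySpred (expf_neq0 2 x0)) size_exp size_x.
have k_n : (n - 1 <= k * 2 <= n)%N.
  by have := odd_double_half n; rewrite -/k -muln2; case: (odd n) => /=; lia.
have yb_size : (size (y * b)%R <= size (x ^+ 2)%R)%N.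
  apply: leq_trans (size_polyMleq _ _) _; rewrite size_b size_x2.
  by move: yx k_n; rewrite size_x addnS /=; lia.
have x2_ge0 r : 0 <= (x ^+ 2).[r] by rewrite horner_exp sqr_ge0.
have yb_pos r : (x ^+ 2).[r] = 0 -> 0 < (y * b).[r].
  rewrite horner_exp => /eqP; rewrite sqrf_eq0 hornerM -rootE => /y_pos.
  by move/mulr_gt0; apply.
have lc_x2 : 0 < lead_coef (x ^+ 2).
  by rewrite lead_coef_exp exprn_even_gt0 // lead_coef_eq0.
have even_x2 : ~~ odd (size (x ^+ 2)).-1 by rewrite size_x2 /= oddM andbF.
have [L [L_gt0 P_pos size_P]] :=
  pencil_positive x2_ge0 yb_pos yb_size lc_x2 even_x2.
have Linv0 : L^-1 != 0 by rewrite invr_eq0 gt_eqF.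
have scaled : x ^+ 2 + y * (L^-1 *: b) = L^-1 *: (L *: x ^+ 2 + y * b).
  by rewrite scalerDr scalerA mulVf ?gt_eqF // scale1r scalerAr.
exists (L^-1 *: b); rewrite /square_completion /Gamma /GammaPos scaled /deg.
rewrite !size_scale // size_P size_b size_x2 -/n.
split=> [r|]; first by rewrite rootZ // rootE gt_eqF.
split=> [r|]; first by rewrite hornerZ mulr_gt0 ?invr_gt0.
by rewrite size_x /=; lia.
Qed.

Lemma square_completion_exists (x y : {poly R}) :
  x != 0 -> (size y <= size x)%N ->
  (forall u, root x u -> 0 < y.[u]) \/ (forall u, root x u -> y.[u] < 0) ->
  exists beta, square_completion x y beta.
Proof.
move=> x0 yx [y_pos|y_neg]; first exact: square_completion_pos.
have Ny_pos u : root x u -> 0 < (- y).[u].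
  by move/y_neg; rewrite hornerN oppr_gt0.
rewrite -size_polyN in yx.
have [beta ok] := square_completion_pos x0 yx Ny_pos.
by exists (- beta); apply: square_completion_opp.
Qed.

End Pencil.

Theorem lemma3p2 (R : rcfType) (x y : {poly R}) :
  x != 0 -> y != 0 -> deg x = deg y ->
  (((forall u : R, root x u -> 0 < y.[u]) \/ (forall u : R, root x u -> y.[u] < 0)) ->
     exists beta : {poly R},
       Gamma beta /\ GammaPos (x ^+ 2 + y * beta) /\
       (deg x - 1 <= deg beta)%N /\ (deg beta <= deg x)%N /\
       (deg (x ^+ 2 + y * beta) = 2 * deg x)%N) /\
  (((forall z : R, root y z -> 0 < x.[z]) \/ (forall z : R, root y z -> x.[z] < 0)) ->
     exists eta : {poly R},
       Gamma eta /\ GammaPos (x * eta + y ^+ 2) /\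
       (deg y - 1 <= deg eta)%N /\ (deg eta <= deg y)%N /\
       (deg (x * eta + y ^+ 2) = 2 * deg y)%N).
Proof.
move=> x0 y0 deg_xy.
have size_xy : size x = size y.
  by rewrite (polySpred x0) (polySpred y0) -!/(deg _) deg_xy.
split => [sign_y | sign_x].
  by apply: square_completion_exists; rewrite ?size_xy.
have [eta completion] := square_completion_exists y0 (eq_leq size_xy) sign_x.
by exists eta; rewrite addrC.
Qed.
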